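(* Let ${}^*\mathbb{C}$, ${}^*\mathbb{R}$ be the ultrapowers and $\rho=\langle R_\varphi\rangle$ as in the context. Then: (i) for $(A_\varphi)\in\mathbb{C}^{\mathcal{D}_0}$, $(A_\varphi)\in\mathcal{M}(\mathbb{C}^{\mathcal{D}_0})$ if and only if $\langle A_\varphi\rangle\in\mathcal{M}_\rho({}^*\mathbb{C})$; (ii) the map $\widehat{A_\varphi}\mapsto\widehat{\langle A_\varphi\rangle}$ is a well-defined field isomorphism from $\widehat{\mathbb{C}^{\mathcal{D}_0}}$ onto ${}^\rho\mathbb{C}$, restricting to an isomorphism of $\widehat{\mathbb{R}^{\mathcal{D}_0}}$ onto ${}^\rho\mathbb{R}$, and it preserves the valuation, the ultra-norm and the ultra-metric; (iii) the order topology and the metric topology on $\widehat{\mathbb{C}^{\mathcal{D}_0}}$ coincide.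
   Context: Fix $\mathcal{D}_0=\mathcal{D}(\mathbb{R}^d)$. For $\varphi\in\mathcal{D}_0$ let $R_\varphi=\sup\{\|x\|:\varphi(x)\neq0\}$ if $\varphi\neq0$, $R_0=1$. For $n\in\mathbb{N}$, $\mathcal{D}_n$ is the set of $\varphi\in\mathcal{D}_0$ that are real-valued, even, with $R_\varphi\le1/n$, $\int\varphi=1$, $\int x^\alpha\varphi(x)dx=0$ for $1\le|\alpha|\le n$, $\int|\varphi|\le1+1/n$, and $\sup_x|\partial^\alpha\varphi(x)|\le R_\varphi^{-2(|\alpha|+d)}$ for $|\alpha|\le n$. $\mathcal{U}$ is a fixed free ultrafilter on $\mathcal{D}_0$ containing every $\mathcal{D}_n$ and $\mathfrak c^+$-good ($\mathfrak c=\mathrm{card}\,\mathbb{R}$); ''$P(\varphi)$ a.e.'' means $\{\varphi:P(\varphi)\}\in\mathcal{U}$. Asymptotic numbers: $\mathcal{M}(\mathbb{C}^{\mathcal{D}_0})$ = nets with $|A_\varphi|\le R_\varphi^{-m}$ a.e. for some $m\in\mathbb{N}$; $\mathcal{N}(\mathbb{C}^{\mathcal{D}_0})$ = nets with $|A_\varphi|<R_\varphi^p$ a.e. for all $p\in\mathbb{N}$; $\widehat{\mathbb{C}^{\mathcal{D}_0}}=\mathcal{M}/\mathcal{N}$, $\widehat{\mathbb{R}^{\mathcal{D}_0}}$ the classes of real-valued nets, ordered by: nonzero $\widehat{A_\varphi}>0$ iff $A_\varphi>0$ a.e.; $|x+iy|=\sqrt{x^2+y^2}$; $z\approx0$ if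 $|z|<1/n$ for all $n$; $\widehat\rho$ = class of $(R_\varphi)$; valuation $v(0)=\infty$, $v(z)=\sup\{q\in\mathbb{Q}: z/\widehat\rho^{\,q}\approx0\}$; ultra-norm $|z|_v=e^{-v(z)}$; ultra-metric $d(a,b)=|a-b|_v$. The order topology on $\widehat{\mathbb{C}^{\mathcal{D}_0}}$ is the product topology from the order topology of $\widehat{\mathbb{R}^{\mathcal{D}_0}}$ under $\widehat{\mathbb{C}^{\mathcal{D}_0}}=\widehat{\mathbb{R}^{\mathcal{D}_0}}+i\widehat{\mathbb{R}^{\mathcal{D}_0}}$; the metric topology is that of $d$. Ultrapower: ${}^*\mathbb{R}=\mathbb{R}^{\mathcal{D}_0}/\!\sim$, where $(A_\varphi)\sim(B_\varphi)$ iff $A_\varphi=B_\varphi$ a.e.; $\langle A_\varphi\rangle$ denotes the class; operations pointwise; $\langle A_\varphi\rangle>0$ iff $A_\varphi>0$ a.e.; similarly ${}^*\mathbb{C}=\mathbb{C}^{\mathcal{D}_0}/\!\sim$ with $|\langle A_\varphi\rangle|=\langle|A_\varphi|\rangle$; $\mathbb{R}\subset{}^*\mathbb{R}$ via constant nets. $\rho=\langle R_\varphi\rangle$ (a positive infinitesimal). Robinson field: $\mathcal{M}_\rho({}^*\mathbb{C})=\{\zeta\in{}^*\mathbb{C}: |\zeta|\le\rho^{-m}\text{ for some } m\in\mathbb{N}\}$, $\mathcal{N}_\rho({}^*\mathbb{C})=\{\zeta: |\zeta|<\rho^n\text{ for all }n\in\mathbb{N}\}$, ${}^\rho\mathbb{C}=\mathcal{M}_\rho/\mathcal{N}_\rho$,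 $\widehat\zeta$ the class; ${}^\rho\mathbb{R}$ the classes of elements of ${}^*\mathbb{R}$. Valuation on ${}^\rho\mathbb{C}$: $v(0)=\infty$, $v(\widehat\zeta)=\mathrm{st}(\ln|\zeta|/\ln\rho)$ for $\widehat\zeta\neq0$, where $\ln$ acts componentwise on nets and $\mathrm{st}$ is the standard part (the unique real number infinitely close to a finite element of ${}^*\mathbb{R}$); $|z|_v=e^{-v(z)}$, $d_v(a,b)=|a-b|_v$. *)

From mathcomp Require Import all_boot all_order all_algebra.
From mathcomp Require Import all_classical all_reals all_analysis.
From mathcomp Require Import complex.

Set Implicit Arguments.
Unset Strict Implicit.
Unset Printing Implicit Defensive.

Import Order.TTheory GRing.Theory Num.Theory numFieldNormedType.Exports.
Local Open Scope classical_set_scope.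
Local Open Scope ring_scope.

Record quot (T : Type) (r : T -> T -> Prop) := Quot {
  qset : set T ;
  qset_cls : exists x, qset = [set y | r x y] }.

Definition cls (T : Type) (r : T -> T -> Prop) (x : T) : quot r :=
  @Quot T r [set y | r x y] (ex_intro _ x erefl).

Definition rep (T : Type) (r : T -> T -> Prop) (q : quot r) : T :=
  projT1 (cid (qset_cls q)).

Definition ultrafilter (T : Type) (U : set (set T)) : Prop :=
  [/\ U setT, ~ U set0,
      (forall A B, U A -> U B -> U (A `&` B)),
      (forall A B, A `<=` B -> U A -> U B) &
      (forall A, U A \/ U (~` A))].

Definition free_ultrafilter (T : Type) (U : set (set T)) : Prop :=
  ultrafilter U /\ (forall A, finite_set A -> ~ U A).

(* kappa-good ultrafilter (Keisler) with kappa = c^+, c = card R: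
   for every lambda < c^+ (i.e. card lambda <= card R) and every
   antitone f from the finite subsets of lambda into U there is a
   multiplicative g : finite subsets of lambda -> U refining f. *)
Definition cplus_good (R : Type) (T : Type) (U : set (set T)) : Prop :=
  forall (L : Type) (inj : L -> R), injective inj ->
  forall f : set L -> set T,
    (forall s, finite_set s -> U (f s)) ->
    (forall s t, finite_set s -> finite_set t -> s `<=` t -> f t `<=` f s) ->
  exists g : set L -> set T,
    (forall s, finite_set s -> U (g s) /\ g s `<=` f s) /\
    (forall s t, finite_set s -> finite_set t -> g (s `|` t) = g s `&` g t).

Section TestFunctions.
Variables (R : realType) (d : nat).

Local Notation C := R[i].
Local Notation Rd := 'rV[R]_d.

Definition cabs (z : C) : R := Num.sqrt (complex.Re z ^+ 2 + complex.Im z ^+ 2).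

Definition enorm (x : Rd) : R := Num.sqrt (\sum_(i < d) x 0 i ^+ 2).

Definition ev (i : 'I_d) : Rd := delta_mx 0 i.

Definition pderiv (i : 'I_d) (f : Rd -> R) : Rd -> R :=
  fun x => derive f x (ev i).

Definition mindex := 'I_d -> nat.
Definition mabs (al : mindex) : nat := (\sum_(i < d) al i)%N.
Definition dpow (al : mindex) (f : Rd -> R) : Rd -> R :=
  foldr (fun i g => iter (al i) (pderiv i) g) f (enum 'I_d).

Definition smooth (f : Rd -> R) : Prop :=
  forall al : mindex,
    continuous (dpow al f) /\ (forall i x, derivable (dpow al f) x (ev i)).

Definition testfun (phi : Rd -> C) : Prop :=
  [/\ smooth (fun x => complex.Re (phi x)),
      smooth (fun x => complex.Im (phi x)) &
      exists M : R, forall x, M < enorm x -> phi x = 0].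

Definition D0 := {phi : Rd -> C | testfun phi}.

Definition Rphi (phi : D0) : R :=
  if pselect (forall x, sval phi x = 0) then 1
  else sup [set enorm x | x in [set x | sval phi x <> 0]].

(* Lebesgue integral over R^d, written as iterated one-dimensional
   Lebesgue integrals (Fubini; the integrands below are continuous with
   compact support). *)
Fixpoint iint (k : nat) (g : (nat -> R) -> R) : R :=
  match k with
  | 0 => g (fun _ => 0)
  | k'.+1 => Rintegral (@lebesgue_measure R) setT
               (fun t => iint k' (fun s => g (fun j => if j == k' then t else s j)))
  end.

Definition intRd (f : Rd -> R) : R := iint d (fun s => f (\row_i s i)).

Definition xpow (al : mindex) (x : Rd) : R := \prod_(i < d) x 0 i ^+ al i.

Definition Dn (n : nat) : set D0 :=
  [set phi : D0 |
    (forall x, complex.Im (sval phi x) = 0) /\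
    (forall x, sval phi (- x) = sval phi x) /\
    Rphi phi <= n%:R^-1 /\
    intRd (fun x => complex.Re (sval phi x)) = 1 /\
    [/\ (forall al : mindex, (1 <= mabs al <= n)%N ->
            intRd (fun x => xpow al x * complex.Re (sval phi x)) = 0),
        intRd (fun x => cabs (sval phi x)) <= 1 + n%:R^-1 &
        (forall al : mindex, (mabs al <= n)%N -> forall x,
            `|dpow al (fun y => complex.Re (sval phi y)) x|
              <= Rphi phi ^- (2 * (mabs al + d)))]].

End TestFunctions.

Section Asymptotic.
Variables (R : realType) (d : nat) (U : set (set (D0 R d))).

Local Notation C := R[i].
Local Notation I := (D0 R d).
Local Notation Rp := (@Rphi R d).

Definition moderate (A : I -> C) : Prop :=
  exists m : nat, U [set phi | cabs (A phi) <= Rp phi ^- m].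

Definition negligible (A : I -> C) : Prop :=
  forall p : nat, U [set phi | cabs (A phi) < Rp phi ^+ p].

Definition Mnet := {A : I -> C | moderate A}.
Definition hrel (A B : Mnet) : Prop := negligible (fun phi => sval A phi - sval B phi).
Definition hatC := quot hrel.

Definition hcls (A : I -> C) (hA : moderate A) : hatC := cls hrel (exist _ A hA).
Definition hrep (x : hatC) : I -> C := sval (rep x).

(* class of a net, with a fallback value for non-moderate nets
   (never used: all nets below are moderate in the situation of the theorem) *)
Definition hmk (A : I -> C) (dflt : hatC) : hatC :=
  match pselect (moderate A) with left h => hcls h | right _ => dflt end.

Definition hadd (x y : hatC) : hatC := hmk (fun phi => hrep x phi + hrep y phi) x.
Definition hmul (x y : hatC) : hatC := hmk (fun phi => hrep x phi * hrep y phi) x.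
Definition hsub (x y : hatC) : hatC := hmk (fun phi => hrep x phi - hrep y phi) x.
Definition hre (x : hatC) : hatC := hmk (fun phi => (complex.Re (hrep x phi))%:C%C) x.
Definition him (x : hatC) : hatC := hmk (fun phi => (complex.Im (hrep x phi))%:C%C) x.

Definition hreal (x : hatC) : Prop :=
  exists A (hA : moderate A), (forall phi, complex.Im (A phi) = 0) /\ x = hcls hA.

Definition hnz (x : hatC) : Prop := ~ negligible (hrep x).

Definition hpos (x : hatC) : Prop :=
  hnz x /\ exists A (hA : moderate A), (forall phi, complex.Im (A phi) = 0) /\
             x = hcls hA /\ U [set phi | 0 < complex.Re (A phi)].
Definition hlt (x y : hatC) : Prop := [/\ hreal x, hreal y & hpos (hsub y x)].

Definition hltN (A B : I -> C) : Prop :=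
  ~ negligible (fun phi => B phi - A phi) /\
  U [set phi | 0 < complex.Re (B phi - A phi)].

Definition happrox0N (A : I -> C) : Prop :=
  forall n : nat, hltN (fun phi => (cabs (A phi))%:C%C) (fun _ => (n.+1%:R^-1)%:C%C).

Definition hval (z : hatC) : \bar R :=
  if pselect (negligible (hrep z)) then +oo%E
  else ereal_sup [set ((ratr q : R)%:E) | q in
         [set q : rat | happrox0N (fun phi => hrep z phi / (powR (Rp phi) (ratr q))%:C%C)]].

Definition eexpN (v : \bar R) : R :=
  match v with EFin r => expR (- r) | _ => 0 end.

Definition hnorm (z : hatC) : R := eexpN (hval z).
Definition hdist (a b : hatC) : R := hnorm (hsub a b).

(* order topology on \hat R; basic open sets are the open intervals and
   rays (a,b), (a,+oo), (-oo,b), and the whole line *)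
Definition hinterval (lo hi : option hatC) (x : hatC) : Prop :=
  [/\ hreal x,
      (if lo is Some a then hlt a x else True) &
      (if hi is Some b then hlt x b else True)].

Definition ord_open (V : set hatC) : Prop :=
  V `<=` hreal /\
  forall x, V x -> exists lo hi, hinterval lo hi x /\ hinterval lo hi `<=` V.

Definition order_open (S : set hatC) : Prop :=
  forall z, S z -> exists V W, [/\ ord_open V, ord_open W, V (hre z), W (him z) &
     forall w, V (hre w) -> W (him w) -> S w].

Definition metric_open (S : set hatC) : Prop :=
  forall z, S z -> exists e : R, 0 < e /\ forall w, hdist z w < e -> S w.

Definition aeq (V : Type) (A B : I -> V) : Prop := U [set phi | A phi = B phi].

Definition starC := quot (@aeq C).
Definition starR := quot (@aeq R).
Definition sC (A : I -> C) : starC := cls (@aeq C) A.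
Definition sR (A : I -> R) : starR := cls (@aeq R) A.

Definition spos (x : starR) : Prop := U [set phi | 0 < rep x phi].
Definition ssubR (x y : starR) : starR := sR (fun phi => rep x phi - rep y phi).
Definition sltR (x y : starR) : Prop := spos (ssubR y x).
Definition sleR (x y : starR) : Prop := sltR x y \/ x = y.
Definition sabs (z : starC) : starR := sR (fun phi => cabs (rep z phi)).
Definition sabsR (x : starR) : starR := sR (fun phi => `|rep x phi|).
Definition sexpz (x : starR) (k : int) : starR := sR (fun phi => rep x phi ^ k).
Definition sln (x : starR) : starR := sR (fun phi => ln (rep x phi)).
Definition sdivR (x y : starR) : starR := sR (fun phi => rep x phi / rep y phi).
Definition sconst (r : R) : starR := sR (fun _ => r).
Definition ssubC (a b : starC) : starC := sC (fun phi => rep a phi - rep b phi).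
Definition embR (x : starR) : starC := sC (fun phi => (rep x phi)%:C%C).

Definition rho : starR := sR Rp.

Definition Mrho (z : starC) : Prop :=
  exists m : nat, sleR (sabs z) (sexpz rho (- (m%:Z))).
Definition Nrho (z : starC) : Prop :=
  forall n : nat, sltR (sabs z) (sexpz rho (n%:Z)).

Definition Mstar := {z : starC | Mrho z}.
Definition rrel (a b : Mstar) : Prop := Nrho (ssubC (sval a) (sval b)).
Definition rhoC := quot rrel.

Definition rcls (z : starC) (hz : Mrho z) : rhoC := cls rrel (exist _ z hz).
Definition rrep (x : rhoC) : starC := sval (rep x).
Definition rmk (z : starC) (dflt : rhoC) : rhoC :=
  match pselect (Mrho z) with left h => rcls h | right _ => dflt end.

Definition radd (x y : rhoC) : rhoC :=
  rmk (sC (fun phi => rep (rrep x) phi + rep (rrep y) phi)) x.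
Definition rmul (x y : rhoC) : rhoC :=
  rmk (sC (fun phi => rep (rrep x) phi * rep (rrep y) phi)) x.
Definition rsub (x y : rhoC) : rhoC := rmk (ssubC (rrep x) (rrep y)) x.

Definition rreal (z : rhoC) : Prop :=
  exists (x : starR) (h : Mrho (embR x)), z = rcls h.

Definition sinf (x : starR) : Prop :=
  forall n : nat, sltR (sabsR x) (sconst (n.+1%:R^-1)).
Definition st (x : starR) : R := xget 0 [set r : R | sinf (ssubR x (sconst r))].

Definition rval (z : rhoC) : \bar R :=
  if pselect (Nrho (rrep z)) then +oo%E
  else (st (sdivR (sln (sabs (rrep z))) (sln rho)))%:E.

Definition rnorm (z : rhoC) : R := eexpN (rval z).
Definition rdist (a b : rhoC) : R := rnorm (rsub a b).

End Asymptotic.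

(* Both fields are quotients of nets indexed by test functions, and every notion involved
   is read off a.e. along U from the representatives: the order of *R is pointwise a.e.
   and rho is the class of (R_phi), so a net is moderate (resp. negligible) exactly when
   its ultrapower class lies in M_rho (resp. N_rho).  Hence the class of (A_phi) in \hat C
   and the class of <A_phi> in rho-C are cut out by the same relation, and the induced map
   is a well-defined ring bijection respecting real elements.  Both valuations equal the
   ultralimit along U of ln|A_phi| / ln R_phi: on the rho-C side this is the standard part
   by definition, on the \hat C side it is the supremum of the rationals q with
   A / rho^q infinitesimal.  Finally an interval of radius R_phi^k around Re z and Im z
   and a ball of radius e^{-k} around z are nested in each other up to a shift of k, which
   gives the equality of the two topologies. *)

From Pilot Require Import Defs.
From mathcomp Require Import all_boot all_order all_algebra.
From mathcomp Require Import all_classical all_reals all_analysis.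
From mathcomp Require Import complex Rstruct.
From mathcomp Require Import lra.
Import Order.TTheory GRing.Theory Num.Theory.
Set Implicit Arguments.
Unset Strict Implicit.
Unset Printing Implicit Defensive.
Local Open Scope classical_set_scope.
Local Open Scope ring_scope.

Section Quotient.
Variables (T : Type) (r : T -> T -> Prop).

Lemma qset_rep (q : quot r) : qset q = [set y | r (rep q) y].
Proof. by rewrite /rep; case: cid. Qed.

Lemma quot_inj (q1 q2 : quot r) : qset q1 = qset q2 -> q1 = q2.
Proof.
case: q1 q2 => [s1 h1] [s2 h2] /= e; subst s2; congr Quot; exact: Prop_irrelevance.
Qed.

Lemma cls_rep (q : quot r) : cls r (rep q) = q.
Proof. by apply: quot_inj; rewrite [RHS]qset_rep. Qed.

Hypotheses (r_refl : forall x, r x x) (r_sym : forall x y, r x y -> r y x)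
  (r_trans : forall x y z, r x y -> r y z -> r x z).

Lemma rel_rep_cls (x : T) : r x (rep (cls r x)).
Proof.
have : qset (cls r x) x by exact: r_refl.
by rewrite qset_rep /= => /r_sym.
Qed.

Lemma eq_cls (x y : T) : cls r x = cls r y <-> r x y.
Proof.
split=> [e|rxy].
  have : qset (cls r y) y by exact: r_refl.
  by rewrite -e.
apply: quot_inj; apply/seteqP; split=> z /= h; [exact: r_trans (r_sym rxy) h|].
exact: r_trans rxy h.
Qed.

End Quotient.

Section SubQuotient.
Variables (T : Type) (P : T -> Prop) (e : T -> T -> Prop).
Hypotheses (e_refl : forall x, e x x) (e_sym : forall x y, e x y -> e y x)
  (e_trans : forall x y z, e x y -> e y z -> e x z).
Local Notation r := (fun a b : {x | P x} => e (sval a) (sval b)).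

Let r_refl (a : {x | P x}) : r a a. Proof. exact: e_refl. Qed.
Let r_sym (a b : {x | P x}) : r a b -> r b a. Proof. exact: e_sym. Qed.
Let r_trans (a b c : {x | P x}) : r a b -> r b c -> r a c. Proof. exact: e_trans. Qed.

Lemma eq_cls_sub (x y : T) (hx : P x) (hy : P y) :
  cls r (exist P x hx) = cls r (exist P y hy) <-> e x y.
Proof. exact: (eq_cls r_refl r_sym r_trans). Qed.

Lemma rep_cls_sub (x : T) (hx : P x) : e (sval (rep (cls r (exist P x hx)))) x.
Proof. by apply: e_sym; exact: (rel_rep_cls r_refl r_sym (exist P x hx)). Qed.

Lemma cls_sub_rep (q : quot r) (h : P (sval (rep q))) : cls r (exist P (sval (rep q)) h) = q.
Proof.
rewrite -[RHS]cls_rep; congr cls; case: (rep q) h => x hx h /=.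
by congr exist; exact: Prop_irrelevance.
Qed.

Lemma quot_sub_eq (q1 q2 : quot r) : q1 = q2 <-> e (sval (rep q1)) (sval (rep q2)).
Proof.
rewrite -{1}(cls_sub_rep (svalP (rep q1))) -{1}(cls_sub_rep (svalP (rep q2))).
exact: eq_cls_sub.
Qed.

End SubQuotient.

Section AlmostEverywhere.
Variables (T : Type) (U : set (set T)).
Hypothesis hU : ultrafilter U.

Definition ae (P : T -> Prop) : Prop := U [set t | P t].

Lemma aeT (P : T -> Prop) : (forall t, P t) -> ae P.
Proof. by case: hU => hT _ _ hS _ HP; apply: hS hT => t _; exact: HP. Qed.

Lemma ae_mono (P Q : T -> Prop) : ae P -> (forall t, P t -> Q t) -> ae Q.
Proof. by case: hU => _ _ _ hS _ hP PQ; apply: hS hP => t /PQ. Qed.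

Lemma ae_mono2 (P Q S : T -> Prop) : ae P -> ae Q ->
  (forall t, P t -> Q t -> S t) -> ae S.
Proof.
case: hU => _ _ hI hS _ hP hQ H; apply: hS (hI _ _ hP hQ) => t [].
exact: H.
Qed.

Lemma ae_mono3 (P Q S W : T -> Prop) : ae P -> ae Q -> ae S ->
  (forall t, P t -> Q t -> S t -> W t) -> ae W.
Proof.
move=> hP hQ hS H; apply: (ae_mono2 (ae_mono2 hP hQ (fun t p q => conj p q)) hS).
by move=> t [p q]; exact: H.
Qed.

Lemma ae_mono4 (P Q S V W : T -> Prop) : ae P -> ae Q -> ae S -> ae V ->
  (forall t, P t -> Q t -> S t -> V t -> W t) -> ae W.
Proof.
move=> hP hQ hS hV H; apply: (ae_mono3 (ae_mono2 hP hQ (fun t p q => conj p q)) hS hV).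
by move=> t [p q]; exact: H.
Qed.

Lemma ae_congr (P Q : T -> Prop) : ae (fun t => P t <-> Q t) -> ae P <-> ae Q.
Proof. by move=> h; split=> h'; apply: ae_mono2 h h' _ => t /[apply]. Qed.

Lemma not_ae_False : ~ ae (fun=> False).
Proof.
case: hU => _ h0 _ hS _ hF; apply: h0; apply: hS hF; by move=> t.
Qed.

Lemma not_aeN (P : T -> Prop) : ~ ae P -> ae (fun t => ~ P t).
Proof. by case: hU => _ _ _ _ /(_ [set t | P t]) []. Qed.

Lemma ae_exists_not (P : nat -> T -> Prop) :
  ~ (forall n, ae (P n)) -> exists n, ae (fun t => ~ P n t).
Proof.
move=> nP; have [n hn] : exists n, ~ ae (P n).
  by apply: contrapT => h; apply: nP => n; apply: contrapT => hn; apply: h; exists n.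
by exists n; exact: not_aeN.
Qed.

Variable R : realType.

Lemma ultralimit_exists (f : T -> R) (m M : R) : ae (fun t => m <= f t <= M) ->
  exists s, forall e, 0 < e -> ae (fun t => `|f t - s| < e).
Proof.
move=> hb; set S := [set r : R | ae (fun t => r < f t)].
have hS : has_sup S.
  split; first by exists (m - 1); apply: (ae_mono hb) => t /andP[h _]; lra.
  exists M => r hr; rewrite leNgt; apply/negP => hrM; apply: not_ae_False.
  by apply: (ae_mono2 hr hb) => t h1 /andP[_ h2]; lra.
exists (sup S) => e e0; have [r hr hrs] := sup_adherent e0 hS.
have hnS : ~ S (sup S + e / 2) by move=> /(sup_upper_bound hS); lra.
apply: (ae_mono2 hr (not_aeN hnS)) => t h1 /negP; rewrite -leNgt => h2.
by rewrite ltr_norml; apply/andP; split; lra.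
Qed.

Lemma ultralimit_unique (f : T -> R) (s s' : R) :
  (forall e, 0 < e -> ae (fun t => `|f t - s| < e)) ->
  (forall e, 0 < e -> ae (fun t => `|f t - s'| < e)) -> s = s'.
Proof.
move=> hs hs'; apply: contrapT => ne.
have e0 : 0 < `|s - s'| / 2 by rewrite divr_gt0 // normr_gt0 subr_eq0; apply/eqP.
apply: not_ae_False; apply: (ae_mono2 (hs _ e0) (hs' _ e0)) => t h1 h2.
have := ler_normD (s - f t) (f t - s'); rewrite addrA subrK (distrC s (f t)) => h.
lra.
Qed.

End AlmostEverywhere.

Section ComplexModulus.
Variable R : realType.
Local Notation C := R[i].

Lemma cabsE (z : C) : cabs z = Normc.normc z.
Proof. by case: z. Qed.

Lemma cabs_ge0 (z : C) : 0 <= cabs z.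
Proof. exact: sqrtr_ge0. Qed.

Lemma ler_cabsD (z w : C) : cabs (z + w) <= cabs z + cabs w.
Proof. rewrite !cabsE; exact: le_normcD. Qed.

Lemma cabsM (z w : C) : cabs (z * w) = cabs z * cabs w.
Proof. rewrite !cabsE; exact: Normc.normcM. Qed.

Lemma cabsV (z : C) : cabs z^-1 = (cabs z)^-1.
Proof. rewrite !cabsE; exact: Normc.normcV. Qed.

Lemma cabsN (z : C) : cabs (- z) = cabs z.
Proof. rewrite !cabsE; exact: normcN. Qed.

Lemma cabs_distC (z w : C) : cabs (z - w) = cabs (w - z).
Proof. by rewrite -cabsN opprB. Qed.

Lemma cabs0 : cabs (0 : C) = 0.
Proof. rewrite cabsE; exact: Normc.normc0. Qed.

Lemma cabs_real (x : R) : cabs x%:C%C = `|x|.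
Proof. by rewrite /cabs /= expr0n /= addr0 sqrtr_sqr. Qed.

Lemma ler_Re_cabs (z : C) : `|complex.Re z| <= cabs z.
Proof. by rewrite -sqrtr_sqr; apply: ler_wsqrtr; rewrite lerDl sqr_ge0. Qed.

Lemma ler_Im_cabs (z : C) : `|complex.Im z| <= cabs z.
Proof. by rewrite -sqrtr_sqr; apply: ler_wsqrtr; rewrite lerDr sqr_ge0. Qed.

Lemma ler_cabs_ReIm (z : C) : cabs z <= `|complex.Re z| + `|complex.Im z|.
Proof.
case: z => a b; rewrite /cabs /=.
have h : a ^+ 2 + b ^+ 2 <= (`|a| + `|b|) ^+ 2.
  rewrite sqrrD !real_normK ?num_real // -addrA lerD2l lerDr.
  by rewrite mulrn_wge0 // mulr_ge0.
by apply: (le_trans (ler_wsqrtr h)); rewrite sqrtr_sqr ger0_norm // addr_ge0.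
Qed.

Lemma cabs_sub_Re (z : C) : cabs (z - (complex.Re z)%:C%C) = cabs (complex.Im z)%:C%C.
Proof. by case: z => a b; rewrite /cabs /= subrr subr0 expr0n /= add0r addr0. Qed.

End ComplexModulus.

Section RealFacts.
Variable R : realType.

Lemma natSinv_lt (c : R) : 0 < c -> exists n : nat, n.+1%:R^-1 < c.
Proof.
move=> c0; exists (Num.Def.archi_bound c^-1); rewrite invf_plt ?posrE //.
apply: (lt_le_trans (archi_boundP _)); first by rewrite invr_ge0 ltW.
by rewrite ler_nat.
Qed.

Lemma expr_half_le (r : R) (p : nat) : 0 < r -> r <= 2^-1 -> 2 * r ^+ p.+1 <= r ^+ p.
Proof.
move=> r0 rh; rewrite exprS mulrA -[leRHS]mul1r ler_pM2r ?exprn_gt0 //; lra.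
Qed.

Lemma expr_half_lt (r : R) (p : nat) : 0 < r -> r <= 2^-1 -> r ^+ p.+1 < r ^+ p.
Proof. move=> r0 rh; have := expr_half_le p r0 rh; have := exprn_gt0 p.+1 r0; lra. Qed.

Lemma cabs_div_powR (z : R[i]) (r q : R) : 0 < r < 1 -> 0 < cabs z ->
  cabs (z / (powR r q)%:C%C) = expR ((ln (cabs z) / ln r - q) * ln r).
Proof.
move=> /andP[r0 r1] z0.
have hL : ln r != 0 by rewrite lt_eqF // ln_lt0 // r0 r1.
rewrite cabsM cabsV cabs_real gtr0_norm ?powR_gt0 // /powR gt_eqF //.
by rewrite mulrBl expRB divfK // lnK ?posrE.
Qed.

Lemma ereal_sup_ratr (Q : set rat) (s : R) :
  (forall q, Q q -> ratr q <= s) -> (forall q, ratr q < s -> Q q) ->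
  ereal_sup [set (ratr q : R)%:E | q in Q] = s%:E.
Proof.
move=> Qle Qlt; apply/eqP; rewrite eq_le; apply/andP; split.
  by apply: ge_ereal_sup => _ [q hq <-]; rewrite lee_fin; exact: Qle.
have below t : t < s -> (t%:E <= ereal_sup [set (ratr q : R)%:E | q in Q])%E.
  move=> ts; have [q] := rat_in_itvoo ts; rewrite in_itv /= => /andP[tq qs].
  apply: (@le_trans _ _ (ratr q)%:E); first by rewrite lee_fin ltW.
  by apply: ereal_sup_ubound; exists q => //; exact: Qlt.
case E : ereal_sup => [t| |]; last 2 first.
- by rewrite leey.
- by have := below (s - 1) ltac:(lra); rewrite E leeNy_eq.
rewrite lee_fin leNgt; apply/negP => ts.
by have := below ((t + s) / 2) ltac:(lra); rewrite E lee_fin; lra.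
Qed.

Lemma ln_ratio_bounds (r b : R) (m n : nat) : 0 < r < 1 ->
  r ^+ n <= b -> b <= r^-1 ^+ m -> - m%:R <= ln b / ln r <= n%:R.
Proof.
move=> /andP[r0 r1] hn hm; have L0 : ln r < 0 by rewrite ln_lt0 // r0.
have b0 : 0 < b by apply: lt_le_trans hn; exact: exprn_gt0.
apply/andP; split; [rewrite ler_ndivlMr // | rewrite ler_ndivrMr //].
  have : ln b <= ln (r^-1 ^+ m) by rewrite ler_ln ?posrE ?exprn_gt0 ?invr_gt0.
  by rewrite lnXn ?invr_gt0 // lnV ?posrE // -mulr_natr; nra.
have : ln (r ^+ n) <= ln b by rewrite ler_ln ?posrE ?exprn_gt0.
by rewrite lnXn // -mulr_natr; nra.
Qed.

(* [|ln b - ln a| <= ln 2], which is small compared to [|ln r|]. *)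
Lemma ln_ratio_close (a b r e : R) : 0 < e -> 0 < a -> a <= 2 * b -> b <= 2 * a ->
  ln r < - (ln 2 / e) -> `|ln b / ln r - ln a / ln r| < e.
Proof.
move=> e0 a0 hab hba hr.
have l2 : 0 < ln (2 : R) by apply: ln_gt0; lra.
have L0 : ln r < 0 by apply: lt_trans hr _; rewrite oppr_lt0 divr_gt0.
have b0 : 0 < b by lra.
have hl : `|ln b - ln a| <= ln 2.
  have h2 : (0 : R) < 2 by [].
  have hb : ln b <= ln 2 + ln a by rewrite -lnM ?posrE // ler_ln ?posrE ?mulr_gt0.
  have ha : ln a <= ln 2 + ln b by rewrite -lnM ?posrE // ler_ln ?posrE ?mulr_gt0.
  by rewrite ler_norml; apply/andP; split; lra.
have hu : `|ln b / ln r - ln a / ln r| * - ln r <= ln 2.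
  by rewrite -mulrBl -(ltr0_norm L0) -normrM divfK ?lt_eqF.
have he : ln 2 / e * e = ln 2 by rewrite divfK ?gt_eqF.
have hK : e * (ln 2 / e) < e * - ln r by rewrite ltr_pM2l // ltrNr.
by move: hu he hK; set u := `|_|; set K := ln 2 / e; nra.
Qed.

End RealFacts.

Section Asymptotics.
Variables (R : realType) (d : nat) (U : set (set (D0 R d))).
Hypotheses (hU : ultrafilter U) (hDn : forall n : nat, U (Dn n.+1)) (hd : (0 < d)%N).

Local Notation C := R[i].
Local Notation I := (D0 R d).
Local Notation Rp := (@Rphi R d).
Local Notation ae := (ae U).
Local Notation aeT := (aeT hU).
Local Notation ae_mono := (ae_mono hU).
Local Notation ae_mono2 := (ae_mono2 hU).
Local Notation ae_mono3 := (ae_mono3 hU).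
Local Notation ae_mono4 := (ae_mono4 hU).
Local Notation ae_congr := (ae_congr hU).
Local Notation not_ae_False := (not_ae_False hU).
Local Notation not_aeN := (not_aeN hU).
Local Notation negl := (Defs.negligible U).
Local Notation modr := (moderate U).

Lemma Rphi_ge0 (phi : I) : 0 <= Rp phi.
Proof.
rewrite /Rphi; case: pselect => [H|h]; first exact: ler01.
have [x hx] : exists x, sval phi x <> 0.
  by apply: contrapT => hh; apply: h => x; apply: contrapT => hx; apply: hh; exists x.
have hs : has_sup [set enorm x | x in [set x | sval phi x <> 0]].
  split; first by exists (enorm x), x.
  case: (svalP phi) => _ _ [M hM]; exists M => _ [y hy <-].
  by rewrite leNgt; apply/negP => /hM.
apply: (le_trans _ (sup_upper_bound hs _)); last by exists x.
exact: sqrtr_ge0.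
Qed.

(* The derivative bound of [D_1] at order 0 reads [|phi| <= R_phi^(-2d)]; with
   [d > 0] and Rocq's [0^-1 = 0] it forces [phi = 0] when [R_phi = 0]. *)
Lemma Rphi_gt0 (phi : I) : Dn 1 phi -> 0 < Rp phi.
Proof.
move=> [hIm [_ [_ [_ [_ _ hder]]]]]; rewrite lt_def Rphi_ge0 andbT.
apply/eqP => h0.
have dpow0 (f : 'rV[R]_d -> R) : dpow (fun=> 0%N) f = f.
  by rewrite /dpow; elim: (enum 'I_d) => //= i s ->.
have phi0 x : sval phi x = 0.
  have := hder (fun=> 0%N); rewrite /mabs big1 // dpow0 => /(_ isT x).
  rewrite h0 add0n expr0n muln_eq0 /= (negbTE (lt0n_neq0 hd)) invr0 normr_le0.
  by move: (hIm x); case: (sval phi x) => a b /= -> /eqP ->.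
move: h0; rewrite /Rphi; case: pselect => [_ /eqP|[]//].
by rewrite oner_eq0.
Qed.

Lemma ae_Rphi_gt0 : ae (fun phi => 0 < Rp phi).
Proof. by apply: ae_mono (hDn 0) _ => phi; exact: Rphi_gt0. Qed.

Lemma ae_Rphi_lt (c : R) : 0 < c -> ae (fun phi => Rp phi < c).
Proof.
move=> /natSinv_lt[n hn]; apply: ae_mono (hDn n) _ => phi [_ [_ [hR _]]].
exact: le_lt_trans hR hn.
Qed.

Lemma ae_Rphi_half : ae (fun phi => 0 < Rp phi < 2^-1).
Proof.
have half_gt0 : (0 : R) < 2^-1 by rewrite invr_gt0 ltr0n.
by apply: ae_mono2 ae_Rphi_gt0 (ae_Rphi_lt half_gt0) _ => phi h1 h2; apply/andP.
Qed.

Lemma ae_ln_Rphi_lt (K : R) : ae (fun phi => 0 < Rp phi < 2^-1 /\ ln (Rp phi) < - K).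
Proof.
apply: ae_mono2 ae_Rphi_half (ae_Rphi_lt (expR_gt0 (- K))) _ => phi h1 h2.
case/andP: (h1) => h3 _; split => //.
by rewrite -(expRK (- K)) ltr_ln ?posrE ?expR_gt0.
Qed.

Lemma ae_Rphi_exp_le (N M : nat) : (N <= M)%N -> ae (fun phi => Rp phi ^+ M <= Rp phi ^+ N).
Proof.
move=> NM; apply: ae_mono ae_Rphi_half _ => phi /andP[h1 h2].
by apply: ler_wiXn2l => //; [exact: ltW | lra].
Qed.

(** * Negligible and moderate nets *)

Lemma negligibleE (A : I -> C) :
  negl A <-> forall p : nat, ae (fun phi => cabs (A phi) <= Rp phi ^+ p).
Proof.
split=> h p; first by apply: ae_mono (h p) _ => phi /ltW.
apply: ae_mono2 (h p.+1) ae_Rphi_half _ => phi h1 /andP[h2 h3].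
exact: le_lt_trans h1 (expr_half_lt _ h2 (ltW h3)).
Qed.

Lemma negligible_le (A B : I -> C) : negl B ->
  ae (fun phi => cabs (A phi) <= cabs (B phi)) -> negl A.
Proof. by move=> hB h p; apply: ae_mono2 (hB p) h _ => phi h1 h2; exact: le_lt_trans h2 h1. Qed.

Lemma negligible_eq (A B : I -> C) : negl B -> ae (fun phi => A phi = B phi) -> negl A.
Proof. by move=> hB h; apply: negligible_le hB _; apply: ae_mono h _ => phi ->. Qed.

Lemma negligible0 : negl (fun=> 0).
Proof. by move=> p; apply: ae_mono ae_Rphi_gt0 _ => phi h; rewrite cabs0 exprn_gt0. Qed.

Lemma negligibleD (A B : I -> C) : negl A -> negl B -> negl (fun phi => A phi + B phi).
Proof.
move=> hA hB; apply/negligibleE => p.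
apply: ae_mono3 (hA p.+1) (hB p.+1) ae_Rphi_half _ => phi h1 h2 /andP[h3 h4].
by have := ler_cabsD (A phi) (B phi); have := expr_half_le p h3 (ltW h4); lra.
Qed.

Lemma negligibleN (A : I -> C) : negl A -> negl (fun phi => - A phi).
Proof. by move=> hA p; apply: ae_mono (hA p) _ => phi; rewrite cabsN. Qed.

Lemma negligibleB (A B : I -> C) : negl A -> negl B -> negl (fun phi => A phi - B phi).
Proof. by move=> hA hB; exact: negligibleD hA (negligibleN hB). Qed.

Lemma negligibleMl (A B : I -> C) : modr A -> negl B -> negl (fun phi => A phi * B phi).
Proof.
move=> [m hm] hB; apply/negligibleE => p.
apply: ae_mono3 hm (hB (p + m)%N) ae_Rphi_gt0 _ => phi h1 h2 h3.
rewrite cabsM; apply: le_trans (ler_pM (cabs_ge0 _) (cabs_ge0 _) h1 (ltW h2)) _.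
by rewrite exprD mulrCA mulVf ?mulr1 // gt_eqF ?exprn_gt0.
Qed.

Lemma negligibleMr (A B : I -> C) : negl A -> modr B -> negl (fun phi => A phi * B phi).
Proof.
move=> hA hB; apply: negligible_eq (negligibleMl hB hA) _.
by apply: aeT => phi; exact: mulrC.
Qed.

Lemma moderateE (A : I -> C) :
  modr A <-> exists m : nat, ae (fun phi => cabs (A phi) <= (Rp phi)^-1 ^+ m).
Proof. by split=> -[m hm]; exists m; apply: ae_mono hm _ => phi; rewrite exprVn. Qed.

Lemma moderate_le (A B : I -> C) : modr B ->
  ae (fun phi => cabs (A phi) <= cabs (B phi)) -> modr A.
Proof. by move=> [m hm] h; exists m; apply: ae_mono2 hm h _ => phi h1 h2; exact: le_trans h2 h1. Qed.

Lemma moderate_eq (A B : I -> C) : modr B -> ae (fun phi => A phi = B phi) -> modr A.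
Proof. by move=> hB h; apply: moderate_le hB _; apply: ae_mono h _ => phi ->. Qed.

Lemma negligible_moderate (A : I -> C) : negl A -> modr A.
Proof.
by move=> hA; exists 0%N; apply: ae_mono (hA 0%N) _ => phi /ltW; rewrite !expr0 invr1.
Qed.

Lemma moderateD (A B : I -> C) : modr A -> modr B -> modr (fun phi => A phi + B phi).
Proof.
move=> /moderateE[m hm] /moderateE[k hk]; apply/moderateE; exists (m + k).+1.
apply: ae_mono3 hm hk ae_Rphi_half _ => phi h1 h2 /andP[h3 h4].
have t2 : 2 <= (Rp phi)^-1 by rewrite -[2]invrK lef_pV2 ?posrE ?invr_gt0; lra.
have t1 : 1 <= (Rp phi)^-1 by lra.
have e1 := ler_weXn2l t1 (leq_addr k m); have e2 := ler_weXn2l t1 (leq_addl m k).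
have : 0 <= (Rp phi)^-1 ^+ (m + k) by rewrite exprn_ge0 // invr_ge0 ltW.
by have := ler_cabsD (A phi) (B phi); rewrite exprS; nra.
Qed.

Lemma moderateN (A : I -> C) : modr A -> modr (fun phi => - A phi).
Proof. by move=> [m hm]; exists m; apply: ae_mono hm _ => phi; rewrite cabsN. Qed.

Lemma moderateB (A B : I -> C) : modr A -> modr B -> modr (fun phi => A phi - B phi).
Proof. by move=> hA hB; exact: moderateD hA (moderateN hB). Qed.

Lemma moderateM (A B : I -> C) : modr A -> modr B -> modr (fun phi => A phi * B phi).
Proof.
move=> /moderateE[m hm] /moderateE[k hk]; apply/moderateE; exists (m + k)%N.
apply: ae_mono2 hm hk _ => phi h1 h2; rewrite cabsM exprD.
exact: ler_pM (cabs_ge0 _) (cabs_ge0 _) h1 h2.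
Qed.

Lemma moderate_Re (A : I -> C) : modr A -> modr (fun phi => (complex.Re (A phi))%:C%C).
Proof. by move=> hA; apply: moderate_le hA _; apply: aeT => phi; rewrite cabs_real ler_Re_cabs. Qed.

Lemma moderate_Im (A : I -> C) : modr A -> modr (fun phi => (complex.Im (A phi))%:C%C).
Proof. by move=> hA; apply: moderate_le hA _; apply: aeT => phi; rewrite cabs_real ler_Im_cabs. Qed.

Lemma moderate_Rphi_exp (k : nat) : modr (fun phi => (Rp phi ^+ k)%:C%C).
Proof.
exists 0%N; apply: ae_mono ae_Rphi_half _ => phi /andP[h1 h2].
have r0 : 0 <= Rp phi by exact: ltW.
by rewrite cabs_real expr0 invr1 ger0_norm ?exprn_ge0 // exprn_ile1 //; lra.
Qed.

Definition heq (A B : I -> C) := negl (fun phi => A phi - B phi).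

Lemma heq_refl (A : I -> C) : heq A A.
Proof. by apply: negligible_eq negligible0 _; apply: aeT => phi; rewrite subrr. Qed.

Lemma heq_sym (A B : I -> C) : heq A B -> heq B A.
Proof. by move=> h; apply: negligible_eq (negligibleN h) _; apply: aeT => phi; rewrite opprB. Qed.

Lemma heq_trans (A B D : I -> C) : heq A B -> heq B D -> heq A D.
Proof.
move=> h1 h2; apply: negligible_eq (negligibleD h1 h2) _.
by apply: aeT => phi; rewrite addrA subrK.
Qed.

Lemma ae_heq (A B : I -> C) : ae (fun phi => A phi = B phi) -> heq A B.
Proof.
by move=> h; apply: negligible_eq negligible0 _; apply: ae_mono h _ => phi ->; rewrite subrr.
Qed.

Lemma heqD (A B A' B' : I -> C) : heq A A' -> heq B B' ->
  heq (fun phi => A phi + B phi) (fun phi => A' phi + B' phi).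
Proof.
move=> h1 h2; apply: negligible_eq (negligibleD h1 h2) _.
by apply: aeT => phi; rewrite opprD addrACA.
Qed.

Lemma heqN (A A' : I -> C) : heq A A' -> heq (fun phi => - A phi) (fun phi => - A' phi).
Proof.
move=> h; apply: negligible_eq (negligibleN h) _.
by apply: aeT => phi; rewrite opprB opprK addrC.
Qed.

Lemma heqB (A B A' B' : I -> C) : heq A A' -> heq B B' ->
  heq (fun phi => A phi - B phi) (fun phi => A' phi - B' phi).
Proof. by move=> h1 h2; exact: heqD h1 (heqN h2). Qed.

Lemma heqM (A B A' B' : I -> C) : modr A -> modr B' -> heq A A' -> heq B B' ->
  heq (fun phi => A phi * B phi) (fun phi => A' phi * B' phi).
Proof.
move=> mA mB h1 h2.
apply: negligible_eq (negligibleD (negligibleMl mA h2) (negligibleMr h1 mB)) _.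
by apply: aeT => phi; rewrite mulrBr mulrBl addrA subrK.
Qed.

Lemma heq_Re (A A' : I -> C) : heq A A' ->
  heq (fun phi => (complex.Re (A phi))%:C%C) (fun phi => (complex.Re (A' phi))%:C%C).
Proof.
move=> h; apply: negligible_le h _; apply: aeT => phi.
by rewrite -rmorphB -raddfB /= cabs_real ler_Re_cabs.
Qed.

Lemma heq_Im (A A' : I -> C) : heq A A' ->
  heq (fun phi => (complex.Im (A phi))%:C%C) (fun phi => (complex.Im (A' phi))%:C%C).
Proof.
move=> h; apply: negligible_le h _; apply: aeT => phi.
by rewrite -rmorphB -raddfB /= cabs_real ler_Im_cabs.
Qed.

Lemma moderate_heq (A B : I -> C) : modr B -> heq A B -> modr A.
Proof.
move=> hB h; apply: moderate_eq (moderateD (negligible_moderate h) hB) _.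
by apply: aeT => phi; rewrite subrK.
Qed.

Lemma negligible_heq (A B : I -> C) : negl B -> heq A B -> negl A.
Proof.
by move=> hB h; apply: negligible_eq (negligibleD h hB) _; apply: aeT => phi; rewrite subrK.
Qed.

(** * The quotients [\hat C] and [rho-C] *)

Lemma hrep_moderate (x : hatC U) : modr (hrep x).
Proof. exact: svalP (rep x). Qed.

Lemma hrep_hcls (A : I -> C) (hA : modr A) : heq (hrep (hcls hA)) A.
Proof. exact: (rep_cls_sub heq_refl heq_sym). Qed.

Lemma hatC_eq (x y : hatC U) : x = y <-> heq (hrep x) (hrep y).
Proof. exact: (quot_sub_eq heq_refl heq_sym heq_trans). Qed.

Lemma eq_hcls (x : hatC U) (A : I -> C) (hA : modr A) : x = hcls hA <-> heq (hrep x) A.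
Proof.
rewrite hatC_eq; split=> h; first exact: heq_trans h (hrep_hcls hA).
exact: heq_trans h (heq_sym (hrep_hcls hA)).
Qed.

Lemma hmk_eq (A : I -> C) (dflt : hatC U) (hA : modr A) : hmk A dflt = hcls hA.
Proof. by rewrite /hmk; case: pselect => // h; congr hcls; exact: Prop_irrelevance. Qed.

Lemma hrep_hmk (A : I -> C) (dflt : hatC U) : modr A -> heq (hrep (hmk A dflt)) A.
Proof. by move=> hA; rewrite (hmk_eq _ hA); exact: hrep_hcls. Qed.

Lemma aeq_refl (V : Type) (A : I -> V) : aeq U A A.
Proof. exact: aeT. Qed.

Lemma aeq_sym (V : Type) (A B : I -> V) : aeq U A B -> aeq U B A.
Proof. by move=> h; apply: ae_mono h _ => phi ->. Qed.

Lemma aeq_trans (V : Type) (A B D : I -> V) : aeq U A B -> aeq U B D -> aeq U A D.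
Proof. by move=> h1 h2; apply: ae_mono2 h1 h2 _ => phi -> ->. Qed.

Lemma ae_rep_cls (V : Type) (f : I -> V) : ae (fun phi => rep (cls (@aeq _ _ U V) f) phi = f phi).
Proof. exact/aeq_sym/(rel_rep_cls (@aeq_refl V) (@aeq_sym V)). Qed.

Lemma starR_eq (x y : starR U) : x = y <-> ae (fun phi => rep x phi = rep y phi).
Proof.
rewrite -{1}(cls_rep x) -{1}(cls_rep y).
exact: (eq_cls (@aeq_refl R) (@aeq_sym R) (@aeq_trans R)).
Qed.

Lemma sltRE (x y : starR U) : sltR x y <-> ae (fun phi => rep x phi < rep y phi).
Proof.
apply: ae_congr; apply: ae_mono (ae_rep_cls (fun phi => rep y phi - rep x phi)) _.
by move=> phi ->; rewrite subr_gt0.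
Qed.

Lemma sleRE (x y : starR U) : sleR x y <-> ae (fun phi => rep x phi <= rep y phi).
Proof.
split=> [[/sltRE h|->]|h]; [by apply: ae_mono h _ => phi /ltW | exact: aeT |].
have [hlt|hge] := pselect (ae (fun phi => rep x phi < rep y phi)); first by left; apply/sltRE.
right; apply/starR_eq; apply: ae_mono2 h (not_aeN hge) _ => phi h1 h2.
by apply/eqP; rewrite eq_le h1 leNgt; apply/negP.
Qed.

Lemma ae_rep_sabs (z : starC U) : ae (fun phi => rep (sabs z) phi = cabs (rep z phi)).
Proof. exact: ae_rep_cls. Qed.

Lemma ae_rep_rho_exp (k : int) : ae (fun phi => rep (sexpz (rho U) k) phi = Rp phi ^ k).
Proof.
apply: ae_mono2 (ae_rep_cls (fun phi => rep (rho U) phi ^ k)) (ae_rep_cls Rp) _.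
by move=> phi -> /= ->.
Qed.

Lemma MrhoE (z : starC U) : Mrho z <-> modr (rep z).
Proof.
suff e m : sleR (sabs z) (sexpz (rho U) (- m%:Z)) <->
    ae (fun phi => cabs (rep z phi) <= Rp phi ^- m).
  by split=> -[m /e hm]; exists m.
rewrite sleRE; apply: ae_congr.
by apply: ae_mono2 (ae_rep_sabs z) (ae_rep_rho_exp (- m%:Z)) _ => phi -> ->; rewrite -exprnN.
Qed.

Lemma NrhoE (z : starC U) : Nrho z <-> negl (rep z).
Proof.
suff e n : sltR (sabs z) (sexpz (rho U) n%:Z) <-> ae (fun phi => cabs (rep z phi) < Rp phi ^+ n).
  by split=> h n; apply/e.
rewrite sltRE; apply: ae_congr.
by apply: ae_mono2 (ae_rep_sabs z) (ae_rep_rho_exp n%:Z) _ => phi -> ->.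
Qed.

Lemma heq_rep_sC (A : I -> C) : heq (rep (sC U A)) A.
Proof. exact/ae_heq/ae_rep_cls. Qed.

Lemma moderate_Mrho (A : I -> C) : modr A <-> Mrho (sC U A).
Proof.
rewrite MrhoE; split=> h; first exact: moderate_heq h (heq_rep_sC A).
exact: moderate_heq h (heq_sym (heq_rep_sC A)).
Qed.

Definition Nrho_rel (z w : starC U) := Nrho (ssubC z w).

Lemma Nrho_relE (z w : starC U) : Nrho_rel z w <-> heq (rep z) (rep w).
Proof.
rewrite /Nrho_rel NrhoE; split=> h; first exact: negligible_heq h (heq_sym (heq_rep_sC _)).
exact: negligible_heq h (heq_rep_sC _).
Qed.

Lemma Nrho_rel_refl (z : starC U) : Nrho_rel z z.
Proof. exact/Nrho_relE/heq_refl. Qed.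

Lemma Nrho_rel_sym (z w : starC U) : Nrho_rel z w -> Nrho_rel w z.
Proof. by move=> /Nrho_relE/heq_sym/Nrho_relE. Qed.

Lemma Nrho_rel_trans (z w v : starC U) : Nrho_rel z w -> Nrho_rel w v -> Nrho_rel z v.
Proof. by move=> /Nrho_relE h1 /Nrho_relE h2; apply/Nrho_relE; exact: heq_trans h1 h2. Qed.

Lemma rrep_moderate (x : rhoC U) : modr (rep (rrep x)).
Proof. exact/MrhoE/(svalP (rep x)). Qed.

Lemma rcls_eq (z w : starC U) (hz : Mrho z) (hw : Mrho w) :
  rcls hz = rcls hw <-> heq (rep z) (rep w).
Proof. rewrite -Nrho_relE; exact: (eq_cls_sub Nrho_rel_refl Nrho_rel_sym Nrho_rel_trans). Qed.

Lemma rhoC_eq (x y : rhoC U) : x = y <-> heq (rep (rrep x)) (rep (rrep y)).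
Proof. rewrite -Nrho_relE; exact: (quot_sub_eq Nrho_rel_refl Nrho_rel_sym Nrho_rel_trans). Qed.

Lemma rrep_rcls (z : starC U) (hz : Mrho z) : heq (rep (rrep (rcls hz))) (rep z).
Proof. exact/Nrho_relE/(rep_cls_sub Nrho_rel_refl Nrho_rel_sym). Qed.

Lemma rmk_eq (z : starC U) (dflt : rhoC U) (hz : Mrho z) : rmk z dflt = rcls hz.
Proof. by rewrite /rmk; case: pselect => // h; congr rcls; exact: Prop_irrelevance. Qed.

(** * The isomorphism *)

Definition Phi (x : hatC U) : rhoC U := rcls ((moderate_Mrho (hrep x)).1 (hrep_moderate x)).

Lemma Phi_rep (x : hatC U) : heq (rep (rrep (Phi x))) (hrep x).
Proof. exact: heq_trans (rrep_rcls _) (heq_rep_sC _). Qed.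

Lemma Phi_hcls (A : I -> C) (hA : modr A) (hM : Mrho (sC U A)) : Phi (hcls hA) = rcls hM.
Proof.
apply/rcls_eq; apply: heq_trans (heq_rep_sC _) _.
exact: heq_trans (hrep_hcls hA) (heq_sym (heq_rep_sC A)).
Qed.

Lemma Phi_bij : bijective Phi.
Proof.
exists (fun z => hcls (rrep_moderate z)) => [x|z].
  by apply/hatC_eq; apply: heq_trans (hrep_hcls _) (Phi_rep x).
by apply/rhoC_eq; apply: heq_trans (Phi_rep _) (hrep_hcls _).
Qed.

Section PhiMorphism.
Variable op : C -> C -> C.
Hypothesis op_moderate : forall A B : I -> C, modr A -> modr B ->
  modr (fun phi => op (A phi) (B phi)).
Hypothesis op_heq : forall A B A' B' : I -> C, modr A -> modr B' -> heq A A' -> heq B B' ->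
  heq (fun phi => op (A phi) (B phi)) (fun phi => op (A' phi) (B' phi)).

Lemma Phi_op (x y : hatC U) :
  Phi (hmk (fun phi => op (hrep x phi) (hrep y phi)) x) =
  rmk (sC U (fun phi => op (rep (rrep (Phi x)) phi) (rep (rrep (Phi y)) phi))) (Phi x).
Proof.
have hm := op_moderate (rrep_moderate (Phi x)) (rrep_moderate (Phi y)).
rewrite (rmk_eq _ ((moderate_Mrho _).1 hm)); apply/rhoC_eq.
apply: heq_trans (Phi_rep _) _; apply: heq_trans (hrep_hmk _ _) _.
  exact: op_moderate (hrep_moderate x) (hrep_moderate y).
apply: heq_trans _ (heq_sym (rrep_rcls _)); apply: heq_trans _ (heq_sym (heq_rep_sC _)).
apply: op_heq; [exact: hrep_moderate | exact: rrep_moderate | |];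
  exact/heq_sym/Phi_rep.
Qed.

End PhiMorphism.

Lemma Phi_add (x y : hatC U) : Phi (hadd x y) = radd (Phi x) (Phi y).
Proof. by apply: Phi_op => [|A B A' B' _ _]; [exact: moderateD | exact: heqD]. Qed.

Lemma Phi_sub (x y : hatC U) : Phi (hsub x y) = rsub (Phi x) (Phi y).
Proof.
by apply: (@Phi_op (fun a b => a - b)) => [|A B A' B' _ _]; [exact: moderateB | exact: heqB].
Qed.

Lemma Phi_mul (x y : hatC U) : Phi (hmul x y) = rmul (Phi x) (Phi y).
Proof. by apply: Phi_op; [exact: moderateM | exact: heqM]. Qed.

Lemma heq_Re_of_negligible_Im (B : I -> C) : negl (fun phi => (complex.Im (B phi))%:C%C) ->
  heq B (fun phi => (complex.Re (B phi))%:C%C).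
Proof. by move=> h; apply: negligible_le h _; apply: aeT => phi; rewrite cabs_sub_Re. Qed.

Lemma negligible_Im_heq (A B : I -> C) : heq A B ->
  negl (fun phi => (complex.Im (A phi))%:C%C) -> negl (fun phi => (complex.Im (B phi))%:C%C).
Proof. by move=> h hA; apply: negligible_heq hA _; exact/heq_sym/heq_Im. Qed.

Lemma negligible_Im_real (A : I -> R) : negl (fun phi => (complex.Im (A phi)%:C%C)%:C%C).
Proof. by apply: negligible_eq negligible0 _; apply: aeT. Qed.

Lemma hrealE (x : hatC U) : hreal x <-> negl (fun phi => (complex.Im (hrep x phi))%:C%C).
Proof.
split=> [[A [hA [hIm ->]]]|h].
  apply: negligible_Im_heq (heq_sym (hrep_hcls hA)) _.
  by apply: negligible_eq negligible0 _; apply: aeT => phi; rewrite hIm.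
exists (fun phi => (complex.Re (hrep x phi))%:C%C), (moderate_Re (hrep_moderate x)).
by split=> //; apply/eq_hcls; exact: heq_Re_of_negligible_Im.
Qed.

Lemma rrealE (z : rhoC U) : rreal z <-> negl (fun phi => (complex.Im (rep (rrep z) phi))%:C%C).
Proof.
split=> [[x [h ->]]|h].
  apply: negligible_Im_heq (heq_sym (rrep_rcls h)) _.
  exact: negligible_Im_heq (heq_sym (heq_rep_sC _)) (negligible_Im_real (rep x)).
set x := sR U (fun phi => complex.Re (rep (rrep z) phi)).
have hx : heq (fun phi => (rep x phi)%:C%C) (fun phi => (complex.Re (rep (rrep z) phi))%:C%C).
  apply: ae_heq; apply: ae_mono (ae_rep_cls (fun phi => complex.Re (rep (rrep z) phi))) _.
  by move=> phi ->.
have hM : Mrho (embR x).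
  apply/moderate_Mrho; exact: moderate_heq (moderate_Re (rrep_moderate z)) hx.
exists x, hM; apply/rhoC_eq; apply: heq_trans (heq_Re_of_negligible_Im h) _.
exact: heq_sym (heq_trans (rrep_rcls _) (heq_trans (heq_rep_sC _) hx)).
Qed.

Lemma Phi_real (x : hatC U) : hreal x <-> rreal (Phi x).
Proof.
by rewrite hrealE rrealE; split; apply: negligible_Im_heq; [exact/heq_sym/Phi_rep|exact: Phi_rep].
Qed.

(** * The valuation *)

Lemma not_negligibleE (B : I -> C) :
  ~ negl B <-> exists n : nat, ae (fun phi => Rp phi ^+ n <= cabs (B phi)).
Proof.
split=> [/(ae_exists_not hU)[n hn]|[n hn] hB]; first exists n.
  by apply: ae_mono hn _ => phi /negP; rewrite -leNgt.
by apply: not_ae_False; apply: ae_mono2 hn (hB n) _ => phi; lra.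
Qed.

Lemma not_negligible_ge (B : I -> C) (c : R) : 0 < c ->
  ae (fun phi => c <= cabs (B phi)) -> ~ negl B.
Proof.
move=> c0 h hB; apply: not_ae_False.
by apply: ae_mono3 h (hB 1%N) (ae_Rphi_lt c0) _ => phi h1; rewrite expr1; lra.
Qed.

Definition lnr (B : I -> C) (phi : I) : R := ln (cabs (B phi)) / ln (Rp phi).

Definition has_val (B : I -> C) (s : R) :=
  forall e : R, 0 < e -> ae (fun phi => 0 < cabs (B phi) /\ `|lnr B phi - s| < e).

Lemma has_val_exists (B : I -> C) : modr B -> ~ negl B -> exists s, has_val B s.
Proof.
move=> /moderateE[m hm] /not_negligibleE[n hn].
have hpos : ae (fun phi => 0 < cabs (B phi)).
  apply: ae_mono2 hn ae_Rphi_gt0 _ => phi h1 h2.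
  by apply: lt_le_trans h1; exact: exprn_gt0.
have [s hs] : exists s, forall e, 0 < e -> ae (fun phi => `|lnr B phi - s| < e).
  apply: (ultralimit_exists hU (m := - m%:R) (M := n%:R)).
  apply: ae_mono3 hm hn ae_Rphi_half _ => phi h1 h2 /andP[h3 h4].
  by apply: ln_ratio_bounds => //; rewrite h3 /=; lra.
by exists s => e e0; apply: ae_mono2 hpos (hs e e0) _.
Qed.

Lemma has_val_heq (A B : I -> C) (s : R) : has_val A s -> ~ negl A -> heq A B -> has_val B s.
Proof.
move=> hv nA hAB e e0; have [n hn] := (not_negligibleE A).1 nA.
have e2 : 0 < e / 2 by lra.
apply: ae_mono4 (hv _ e2) hn (hAB n.+1) (ae_ln_Rphi_lt (ln 2 / (e / 2))) _.
move=> phi [A0 hvA] hnA hAB' [/andP[r0 r2] hlnr].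
have hBA : cabs (B phi) <= cabs (A phi - B phi) + cabs (A phi).
  by rewrite -[X in cabs X <= _](subrK (A phi)) cabs_distC; exact: ler_cabsD.
have hAB2 : cabs (A phi) <= cabs (A phi - B phi) + cabs (B phi).
  by rewrite -[X in cabs X <= _](subrK (B phi)); exact: ler_cabsD.
have hc : 2 * cabs (A phi - B phi) <= cabs (A phi).
  apply: le_trans hnA; apply: le_trans (expr_half_le n r0 (ltW r2)).
  by rewrite ler_pM2l // ltW.
have [hab hba] : cabs (A phi) <= 2 * cabs (B phi) /\ cabs (B phi) <= 2 * cabs (A phi).
  by move: hBA hAB2 hc; have := cabs_ge0 (A phi - B phi); split; lra.
have hcl := ln_ratio_close e2 A0 hab hba hlnr.
split; first lra.
have := ler_normD (lnr B phi - lnr A phi) (lnr A phi - s); rewrite addrA subrK.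
by move: hcl hvA; rewrite /lnr; set u := ln _ / _; set v := ln _ / _; lra.
Qed.

Lemma happrox0NE (B : I -> C) : happrox0N U B <->
  forall n : nat, ae (fun phi => cabs (B phi) < n.+1%:R^-1).
Proof.
split=> h n.
  by case: (h n) => _ h2; apply: ae_mono h2 _ => phi /=; rewrite subr_gt0.
split; last by apply: ae_mono (h n) _ => phi /=; rewrite subr_gt0.
have c0 : (0 : R) < n.+1%:R^-1 / 2 by rewrite divr_gt0 ?invr_gt0 ?ltr0n.
apply: (not_negligible_ge c0); apply: ae_mono (h n.*2.+1) _ => phi hb.
rewrite /= -rmorphB cabs_real ler_normr; apply/orP; left.
move: hb; have -> : (n.*2.+2%:R : R) = 2 * n.+1%:R by rewrite -mul2n -natrM mulnS mul2n.
rewrite invfM; have := cabs_ge0 (B phi).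
by set N := (n.+1%:R : R)^-1 in c0 *; lra.
Qed.

Lemma cabs_div_Rphi_powR (B : I -> C) (q : R) (phi : I) : 0 < Rp phi < 2^-1 ->
  0 < cabs (B phi) ->
  cabs (B phi / (powR (Rp phi) q)%:C%C) = expR ((lnr B phi - q) * ln (Rp phi)).
Proof. by move=> /andP[h1 h2] hB; apply: cabs_div_powR => //; rewrite h1 /=; lra. Qed.

Lemma happrox0N_ratr_le (B : I -> C) (s : R) (q : rat) : has_val B s ->
  happrox0N U (fun phi => B phi / (powR (Rp phi) (ratr q))%:C%C) -> ratr q <= s.
Proof.
move=> hv /happrox0NE /(_ 0%N) hq; rewrite leNgt; apply/negP => sq; apply: not_ae_False.
have e0 : 0 < (ratr q - s) / 2 by lra.
apply: ae_mono3 hq (hv _ e0) (ae_ln_Rphi_lt 0) _ => phi h1 [h2 h3] [h4 h5].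
move: h1; rewrite cabs_div_Rphi_powR // invr1 expR_lt1 oppr0 in h5 *.
by move: h3; rewrite ltr_norml => /andP[_ h3]; nra.
Qed.

Lemma ratr_lt_happrox0N (B : I -> C) (s : R) (q : rat) : has_val B s -> ratr q < s ->
  happrox0N U (fun phi => B phi / (powR (Rp phi) (ratr q))%:C%C).
Proof.
move=> hv qs; apply/happrox0NE => n.
set e := (s - ratr q) / 2; have e0 : 0 < e by rewrite /e; lra.
have ln0 : 0 <= ln (n.+1%:R : R) by apply: ln_ge0; rewrite ler1n.
apply: ae_mono2 (hv _ e0) (ae_ln_Rphi_lt (ln n.+1%:R / e)) _ => phi [h2 h3] [h4 h5].
rewrite cabs_div_Rphi_powR // -[_^-1]lnK ?posrE ?invr_gt0 ?ltr0n // lnV ?posrE ?ltr0n //.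
rewrite ltr_expR; move: h3; rewrite ltr_norml => /andP[h3 _].
have hK : ln n.+1%:R / e * e = ln n.+1%:R by rewrite divfK // gt_eqF.
have L0 : ln (Rp phi) < 0 by apply: lt_le_trans h5 _; rewrite oppr_le0 divr_ge0 // ltW.
have p1 : (lnr B phi - ratr q) * ln (Rp phi) < e * ln (Rp phi).
  by rewrite ltr_nM2r //; rewrite /e in h3 *; lra.
by move: hK h5 p1; set K := ln n.+1%:R / e; nra.
Qed.

Lemma hval_has_val (x : hatC U) (s : R) : ~ negl (hrep x) -> has_val (hrep x) s ->
  hval x = s%:E.
Proof.
move=> nx hv; rewrite /hval; case: pselect => [/nx[]|nx'].
apply: ereal_sup_ratr => q; first exact: happrox0N_ratr_le.
exact: ratr_lt_happrox0N.
Qed.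

Lemma sinf_subE (X : starR U) (r : R) : sinf (ssubR X (sconst U r)) <->
  forall e, 0 < e -> ae (fun phi => `|rep X phi - r| < e).
Proof.
set y := ssubR X (sconst U r).
have hy : ae (fun phi => rep y phi = rep X phi - r).
  apply: ae_mono2 (ae_rep_cls (fun phi => rep X phi - rep (sconst U r) phi))
    (ae_rep_cls (fun=> r)) _ => phi.
  by rewrite /y /ssubR /sR /sconst /sR => -> ->.
have step n : sltR (sabsR y) (sconst U n.+1%:R^-1) <->
    ae (fun phi => `|rep X phi - r| < n.+1%:R^-1).
  rewrite sltRE; apply: ae_congr.
  apply: ae_mono3 hy (ae_rep_cls (fun phi => `|rep y phi|))
    (ae_rep_cls (fun=> n.+1%:R^-1 : R)) _ => phi h1.
  by rewrite /sabsR /sR /sconst /sR => -> ->; rewrite h1.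
split=> h.
  move=> e /natSinv_lt[n hn]; apply: ae_mono ((step n).1 (h n)) _ => phi h1.
  exact: lt_trans h1 hn.
by move=> n; apply/step; apply: h; rewrite invr_gt0 ltr0n.
Qed.

Lemma st_ultralimit (X : starR U) (f : I -> R) (s : R) :
  ae (fun phi => rep X phi = f phi) ->
  (forall e, 0 < e -> ae (fun phi => `|f phi - s| < e)) -> st X = s.
Proof.
move=> hX hf.
have conv r : sinf (ssubR X (sconst U r)) <->
    forall e, 0 < e -> ae (fun phi => `|f phi - r| < e).
  rewrite sinf_subE; split=> h e e0.
    by apply: ae_mono2 (h e e0) hX _ => phi + <-.
  by apply: ae_mono2 (h e e0) hX _ => phi + ->.
apply: xget_unique; first exact/conv.
by move=> r /conv hr; exact: (ultralimit_unique hU hr hf).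
Qed.

Lemma rval_has_val (x : hatC U) (s : R) : ~ negl (hrep x) -> has_val (hrep x) s ->
  rval (Phi x) = s%:E.
Proof.
move=> nx hv; rewrite /rval; case: pselect => [hN|hN].
  by case: nx; exact: negligible_heq ((NrhoE _).1 hN) (heq_sym (Phi_rep x)).
congr EFin; set z := rrep (Phi x).
have hvz : has_val (rep z) s by exact: has_val_heq hv nx (heq_sym (Phi_rep x)).
apply: (st_ultralimit (f := lnr (rep z))); last first.
  by move=> e e0; apply: ae_mono (hvz e e0) _ => phi [].
set X := sln (sabs z); set Y := sln (rho U).
have hXY : ae (fun phi => rep (sdivR X Y) phi = rep X phi / rep Y phi /\
    rep X phi = ln (rep (sabs z) phi)).
  exact: ae_mono2 (ae_rep_cls _) (ae_rep_cls _) (fun phi h1 h2 => conj h1 h2).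
apply: ae_mono4 hXY (ae_rep_sabs z) (ae_rep_cls (fun phi => ln (rep (rho U) phi)))
  (ae_rep_cls Rp) _ => phi [-> ->] -> hY hrho.
by rewrite /lnr /Y /sln /sR hY -hrho.
Qed.

Lemma Phi_val (x : hatC U) : rval (Phi x) = hval x.
Proof.
have [nx|nx] := pselect (negl (hrep x)).
  rewrite /rval /hval; case: pselect => [hN|hN]; case: pselect => // hx.
  by case: hN; apply/NrhoE; exact: negligible_heq nx (Phi_rep x).
have [s hs] := has_val_exists (hrep_moderate x) nx.
by rewrite (rval_has_val nx hs) (hval_has_val nx hs).
Qed.

Definition close (n : nat) (A B : I -> C) :=
  ae (fun phi => cabs (A phi - B phi) <= Rp phi ^+ n).

Lemma close_sym (n : nat) (A B : I -> C) : close n A B -> close n B A.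
Proof. by move=> h; apply: ae_mono h _ => phi; rewrite cabs_distC. Qed.

Lemma close_le (m n : nat) (A B : I -> C) : (m <= n)%N -> close n A B -> close m A B.
Proof. by move=> mn h; apply: ae_mono2 h (ae_Rphi_exp_le mn) _ => phi; exact: le_trans. Qed.

Lemma close_heq (n : nat) (A A' B B' : I -> C) : heq A A' -> heq B B' ->
  close n.+1 A B -> close n A' B'.
Proof.
move=> hA hB h; apply: ae_mono4 h (hA n.+2) (hB n.+2) ae_Rphi_half _.
move=> phi h1 h2 h3 /andP[r0 r2].
have e : A' phi - B' phi = (A' phi - A phi) + ((A phi - B phi) + (B phi - B' phi)).
  by rewrite addrA addrA subrKA subrK.
rewrite e; apply: le_trans (ler_cabsD _ _) _; rewrite cabs_distC.
apply: le_trans (lerD (ltW h2) (ler_cabsD _ _)) _.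
have := expr_half_le n r0 (ltW r2); have := expr_half_le n.+1 r0 (ltW r2).
by move: h1 h3; set a := Rp phi ^+ n.+1; set b := Rp phi ^+ n.+2; lra.
Qed.

Lemma close_Re (n : nat) (A B : I -> C) : close n A B ->
  close n (fun phi => (complex.Re (A phi))%:C%C) (fun phi => (complex.Re (B phi))%:C%C).
Proof.
move=> h; apply: ae_mono h _ => phi; apply: le_trans.
by rewrite -rmorphB -raddfB cabs_real ler_Re_cabs.
Qed.

Lemma close_ReIm (n : nat) (A B : I -> C) :
  close n.+1 (fun phi => (complex.Re (A phi))%:C%C) (fun phi => (complex.Re (B phi))%:C%C) ->
  close n.+1 (fun phi => (complex.Im (A phi))%:C%C) (fun phi => (complex.Im (B phi))%:C%C) ->
  close n A B.
Proof.
move=> hRe hIm; apply: ae_mono3 hRe hIm ae_Rphi_half _ => phi.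
rewrite -!rmorphB !cabs_real -!raddfB /= => h1 h2 /andP[r0 r2].
apply: le_trans (ler_cabs_ReIm _) _; apply: le_trans (lerD h1 h2) _.
by have := expr_half_le n r0 (ltW r2); lra.
Qed.

Lemma hnorm_le (x : hatC U) (K : nat) :
  ae (fun phi => cabs (hrep x phi) <= Rp phi ^+ K) -> hnorm x <= expR (- K%:R).
Proof.
move=> hK; have [nx|nx] := pselect (negl (hrep x)).
  by rewrite /hnorm /hval; case: pselect => // hN; rewrite ltW ?expR_gt0.
have [s hs] := has_val_exists (hrep_moderate x) nx.
rewrite /hnorm (hval_has_val nx hs) /= ler_expR lerN2 leNgt; apply/negP => sK.
have e0 : 0 < (K%:R - s) / 2 by lra.
apply: not_ae_False; apply: ae_mono3 hK (hs _ e0) (ae_ln_Rphi_lt 0) _.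
move=> phi h1 [h2 h3] [/andP[r0 _] L0]; rewrite oppr0 in L0.
have : K%:R <= lnr (hrep x) phi.
  rewrite /lnr ler_ndivlMr // mulr_natl -lnXn //.
  by rewrite ler_ln ?posrE ?exprn_gt0.
by move: h3; rewrite ltr_norml => /andP[h3 h3']; lra.
Qed.

Lemma hnorm_lt (x : hatC U) (N : nat) :
  hnorm x < expR (- N%:R) -> ae (fun phi => cabs (hrep x phi) < Rp phi ^+ N).
Proof.
move=> hN; have [nx|nx] := pselect (negl (hrep x)); first exact: nx.
have [s hs] := has_val_exists (hrep_moderate x) nx.
move: hN; rewrite /hnorm (hval_has_val nx hs) /= ltr_expR ltrN2 => sN.
have e0 : 0 < s - N%:R by lra.
apply: ae_mono2 (hs _ e0) (ae_ln_Rphi_lt 0) _ => phi [h2 h3] [/andP[r0 _] L0].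
rewrite oppr0 in L0; rewrite -ltr_ln ?posrE ?exprn_gt0 // lnXn // -mulr_natl.
rewrite -ltr_ndivlMr //.
by move: h3; rewrite /lnr ltr_norml => /andP[h3 _]; lra.
Qed.

Lemma hsub_rep (a b : hatC U) : heq (hrep (hsub a b)) (fun phi => hrep a phi - hrep b phi).
Proof. exact/hrep_hmk/moderateB/hrep_moderate/hrep_moderate. Qed.

Lemma hdist_le (z w : hatC U) (K : nat) : close K.+1 (hrep z) (hrep w) -> hdist z w <= expR (- K%:R).
Proof.
move=> h; apply: hnorm_le; have : close K (hrep (hsub z w)) (fun=> 0).
  by apply: close_heq (heq_sym (hsub_rep z w)) (heq_refl _) _; apply: ae_mono h _ => phi; rewrite subr0.
by move=> h'; apply: ae_mono h' _ => phi; rewrite subr0.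
Qed.

Lemma hdist_lt (z w : hatC U) (N : nat) : hdist z w < expR (- N.+1%:R) -> close N (hrep z) (hrep w).
Proof.
move=> /hnorm_lt h; have : close N (fun phi => hrep z phi - hrep w phi) (fun=> 0).
  by apply: close_heq (hsub_rep z w) (heq_refl _) _; apply: ae_mono h _ => phi /ltW; rewrite subr0.
by move=> h'; apply: ae_mono h' _ => phi; rewrite subr0.
Qed.

Lemma Re_lower_heq (A B : I -> C) (n : nat) : heq A B ->
  ae (fun phi => Rp phi ^+ n <= complex.Re (A phi)) ->
  ae (fun phi => Rp phi ^+ n.+1 <= complex.Re (B phi)).
Proof.
move=> hAB h; apply: ae_mono3 h (hAB n.+1) ae_Rphi_half _ => phi h1 h2 /andP[r0 r2].
have := le_lt_trans (ler_Re_cabs _) h2; rewrite raddfB ltr_norml => /andP[_ h3].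
by have := expr_half_le n r0 (ltW r2); lra.
Qed.

Lemma hposE (x : hatC U) :
  hpos x <-> hreal x /\ exists n, ae (fun phi => Rp phi ^+ n <= complex.Re (hrep x phi)).
Proof.
split=> [[nx [A [hA [hIm [ex hRe]]]]]|[hx [n hn]]].
  split; first by exists A, hA.
  have hxA : heq (hrep x) A by apply/eq_hcls.
  have [n hn] := (not_negligibleE A).1 (fun nA => nx (negligible_heq nA hxA)).
  exists n.+1; apply: Re_lower_heq (heq_sym hxA) _.
  apply: ae_mono2 hn hRe _ => phi; case: (A phi) (hIm phi) => a b /= -> h1 a0.
  by rewrite cabs_real gtr0_norm in h1.
split.
  apply/not_negligibleE; exists n; apply: ae_mono hn _ => phi h.
  exact: le_trans h (le_trans (ler_norm _) (ler_Re_cabs _)).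
exists (fun phi => (complex.Re (hrep x phi))%:C%C), (moderate_Re (hrep_moderate x)).
split=> //; split; first by apply/eq_hcls/heq_Re_of_negligible_Im/hrealE.
apply: ae_mono2 hn ae_Rphi_gt0 _ => phi h1 h2; apply: lt_le_trans h1.
exact: exprn_gt0.
Qed.

Lemma hreal_sub (a b : hatC U) : hreal a -> hreal b -> hreal (hsub a b).
Proof.
move=> /hrealE ha /hrealE hb; apply/hrealE.
apply: negligible_Im_heq (heq_sym (hsub_rep a b)) _.
by apply: negligible_eq (negligibleB ha hb) _; apply: aeT => phi; rewrite -rmorphB -raddfB.
Qed.

Lemma hltE (a y : hatC U) : hlt a y <-> [/\ hreal a, hreal y &
  exists n, ae (fun phi => Rp phi ^+ n <= complex.Re (hrep y phi - hrep a phi))].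
Proof.
split=> [[ha hy /hposE[_ [n hn]]]|[ha hy [n hn]]].
  by split=> //; exists n.+1; exact: Re_lower_heq (hsub_rep y a) hn.
split=> //; apply/hposE; split; first exact: hreal_sub.
by exists n.+1; exact: Re_lower_heq (heq_sym (hsub_rep y a)) hn.
Qed.

(** * The order topology and the metric topology *)

Definition hrho_pow (k : nat) : hatC U := hcls (moderate_Rphi_exp k).

Lemma hreal_hrho_pow (k : nat) : hreal (hrho_pow k).
Proof. by exists (fun phi => (Rp phi ^+ k)%:C%C), (moderate_Rphi_exp k). Qed.

Lemma hadd_rep (a b : hatC U) : heq (hrep (hadd a b)) (fun phi => hrep a phi + hrep b phi).
Proof. exact/hrep_hmk/moderateD/hrep_moderate/hrep_moderate. Qed.

Lemma hreal_add (a b : hatC U) : hreal a -> hreal b -> hreal (hadd a b).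
Proof.
move=> /hrealE ha /hrealE hb; apply/hrealE.
apply: negligible_Im_heq (heq_sym (hadd_rep a b)) _.
by apply: negligible_eq (negligibleD ha hb) _; apply: aeT => phi; rewrite -rmorphD -raddfD.
Qed.

Lemma hrep_hsub_hrho_pow (c : hatC U) (k : nat) :
  heq (hrep (hsub c (hrho_pow k))) (fun phi => hrep c phi - (Rp phi ^+ k)%:C%C).
Proof. exact: heq_trans (hsub_rep _ _) (heqB (heq_refl _) (hrep_hcls _)). Qed.

Lemma hrep_hadd_hrho_pow (c : hatC U) (k : nat) :
  heq (hrep (hadd c (hrho_pow k))) (fun phi => hrep c phi + (Rp phi ^+ k)%:C%C).
Proof. exact: heq_trans (hadd_rep _ _) (heqD (heq_refl _) (hrep_hcls _)). Qed.

Lemma itv_around (c : hatC U) (k : nat) : hreal c ->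
  hlt (hsub c (hrho_pow k)) c /\ hlt c (hadd c (hrho_pow k)).
Proof.
have hk : ae (fun phi => Rp phi ^+ k <= complex.Re (Rp phi ^+ k)%:C%C) by exact: aeT.
move=> hc; have hlo := hreal_sub hc (hreal_hrho_pow k); have hhi := hreal_add hc (hreal_hrho_pow k).
split; apply/hltE; split=> //; exists k.+1; apply: Re_lower_heq hk.
  apply: heq_sym; apply: heq_trans (heqB (heq_refl _) (hrep_hsub_hrho_pow c k)) _.
  by apply: ae_heq; apply: aeT => phi; rewrite opprB addrC subrK.
apply: heq_sym; apply: heq_trans (heqB (hrep_hadd_hrho_pow c k) (heq_refl _)) _.
by apply: ae_heq; apply: aeT => phi; rewrite addrC addKr.
Qed.

Lemma itv_close (c y : hatC U) (k : nat) :
  hlt (hsub c (hrho_pow k)) y -> hlt y (hadd c (hrho_pow k)) ->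
  close k (fun phi => (complex.Re (hrep y phi))%:C%C) (fun phi => (complex.Re (hrep c phi))%:C%C).
Proof.
move=> /hltE[_ _ [n1 h1]] /hltE[_ _ [n2 h2]].
have h1' := Re_lower_heq (heqB (heq_refl _) (hrep_hsub_hrho_pow c k)) h1.
have h2' := Re_lower_heq (heqB (hrep_hadd_hrho_pow c k) (heq_refl _)) h2.
apply: ae_mono3 h1' h2' ae_Rphi_gt0 _ => phi; rewrite -rmorphB cabs_real -raddfB /=.
rewrite !raddfB /= !raddfD /= => g1 g2 r0.
have := exprn_gt0 n1.+1 r0; have := exprn_gt0 n2.+1 r0.
by rewrite ler_norml; move: g1 g2; set t := Rp phi ^+ k => *; apply/andP; split; lra.
Qed.

Lemma close_ReE (n : nat) (A B : I -> C) :
  close n (fun phi => (complex.Re (A phi))%:C%C) (fun phi => (complex.Re (B phi))%:C%C) =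
  ae (fun phi => `|complex.Re (A phi) - complex.Re (B phi)| <= Rp phi ^+ n).
Proof. by rewrite /close; congr (ae _); apply/funext => phi; rewrite -rmorphB cabs_real. Qed.

Lemma hlt_stable_r (a y : hatC U) : hlt a y -> exists N : nat, forall y', hreal y' ->
  close N (fun phi => (complex.Re (hrep y' phi))%:C%C)
    (fun phi => (complex.Re (hrep y phi))%:C%C) -> hlt a y'.
Proof.
move=> /hltE[ha hy [n hn]]; exists n.+1 => y' hy'; rewrite close_ReE => hc.
apply/hltE; split=> //; exists n.+1.
apply: ae_mono3 hn hc ae_Rphi_half _ => phi; rewrite !raddfB /= => h1 h2 /andP[r0 r2].
have := expr_half_le n r0 (ltW r2); rewrite ler_norml in h2.
by case/andP: h2; lra.
Qed.

Lemma hlt_stable_l (y b : hatC U) : hlt y b -> exists N : nat, forall y', hreal y' ->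
  close N (fun phi => (complex.Re (hrep y' phi))%:C%C)
    (fun phi => (complex.Re (hrep y phi))%:C%C) -> hlt y' b.
Proof.
move=> /hltE[hy hb [n hn]]; exists n.+1 => y' hy'; rewrite close_ReE => hc.
apply/hltE; split=> //; exists n.+1.
apply: ae_mono3 hn hc ae_Rphi_half _ => phi; rewrite !raddfB /= => h1 h2 /andP[r0 r2].
have := expr_half_le n r0 (ltW r2); rewrite ler_norml in h2.
by case/andP: h2; lra.
Qed.

Lemma itv_stable (lo hi : option (hatC U)) (y : hatC U) : hinterval lo hi y ->
  exists N : nat, forall y', hreal y' -> close N (fun phi => (complex.Re (hrep y' phi))%:C%C)
    (fun phi => (complex.Re (hrep y phi))%:C%C) -> hinterval lo hi y'.
Proof.
case=> hy hlo hhi.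
have [N1 h1] : exists N : nat, forall y', hreal y' -> close N
    (fun phi => (complex.Re (hrep y' phi))%:C%C) (fun phi => (complex.Re (hrep y phi))%:C%C) ->
    if lo is Some a then hlt a y' else True.
  by case: lo hlo => [a /hlt_stable_r //|_]; exists 0%N.
have [N2 h2] : exists N : nat, forall y', hreal y' -> close N
    (fun phi => (complex.Re (hrep y' phi))%:C%C) (fun phi => (complex.Re (hrep y phi))%:C%C) ->
    if hi is Some b then hlt y' b else True.
  by case: hi hhi => [b /hlt_stable_l //|_]; exists 0%N.
exists (maxn N1 N2) => y' hy' hc; split=> //; [apply: h1 | apply: h2] => //.
  exact: close_le (leq_maxl N1 N2) hc.
exact: close_le (leq_maxr N1 N2) hc.
Qed.

Lemma ord_open_hinterval (lo hi : option (hatC U)) : ord_open (hinterval lo hi).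
Proof. by split=> [x []|x hx] //; exists lo, hi; split=> // y. Qed.

Lemma heq_Re_hre (x : hatC U) : heq (fun phi => (complex.Re (hrep (hre x) phi))%:C%C)
  (fun phi => (complex.Re (hrep x phi))%:C%C).
Proof.
apply: heq_trans (heq_Re (hrep_hmk _ (moderate_Re (hrep_moderate x)))) _.
exact/ae_heq/aeT.
Qed.

Lemma heq_Re_him (x : hatC U) : heq (fun phi => (complex.Re (hrep (him x) phi))%:C%C)
  (fun phi => (complex.Im (hrep x phi))%:C%C).
Proof.
apply: heq_trans (heq_Re (hrep_hmk _ (moderate_Im (hrep_moderate x)))) _.
exact/ae_heq/aeT.
Qed.

Lemma hreal_hre (x : hatC U) : hreal (hre x).
Proof.
apply/hrealE; apply: negligible_Im_heq (heq_sym (hrep_hmk _ (moderate_Re (hrep_moderate x)))) _.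
exact: negligible_Im_real.
Qed.

Lemma hreal_him (x : hatC U) : hreal (him x).
Proof.
apply/hrealE; apply: negligible_Im_heq (heq_sym (hrep_hmk _ (moderate_Im (hrep_moderate x)))) _.
exact: negligible_Im_real.
Qed.

Lemma expRN_nat_lt (e : R) : 0 < e -> exists K : nat, expR (- K%:R) < e.
Proof.
move=> e0; exists (Num.Def.archi_bound `|ln e|).
rewrite -[ltRHS](lnK e0) ltr_expR ltrNl.
apply: le_lt_trans (archi_boundP (normr_ge0 _)); rewrite -normrN; exact: ler_norm.
Qed.

Lemma metric_open_order_open (S : set (hatC U)) : metric_open S -> order_open S.
Proof.
move=> hS z /hS[e [e0 he]]; have [K hK] := expRN_nat_lt e0.
pose V c := hinterval (Some (hsub c (hrho_pow K.+3))) (Some (hadd c (hrho_pow K.+3))).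
have [l1 r1] := itv_around K.+3 (hreal_hre z); have [l2 r2] := itv_around K.+3 (hreal_him z).
exists (V (hre z)), (V (him z)); split; try exact: ord_open_hinterval.
- by split=> //; exact: hreal_hre.
- by split=> //; exact: hreal_him.
move=> w [_ v1 v2] [_ w1 w2]; apply: he; apply: le_lt_trans hK; apply/hdist_le/close_sym.
apply: close_ReIm.
  exact: close_heq (heq_Re_hre w) (heq_Re_hre z) (itv_close v1 v2).
exact: close_heq (heq_Re_him w) (heq_Re_him z) (itv_close w1 w2).
Qed.

Lemma close_Im (n : nat) (A B : I -> C) : close n A B ->
  close n (fun phi => (complex.Im (A phi))%:C%C) (fun phi => (complex.Im (B phi))%:C%C).
Proof.
move=> h; apply: ae_mono h _ => phi; apply: le_trans.
by rewrite -rmorphB -raddfB cabs_real ler_Im_cabs.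
Qed.

Lemma order_open_metric_open (S : set (hatC U)) : order_open S -> metric_open S.
Proof.
move=> hO z /hO[V [W [oV oW Vz Wz hVW]]].
have [lo1 [hi1 [i1 s1]]] := oV.2 _ Vz; have [lo2 [hi2 [i2 s2]]] := oW.2 _ Wz.
have [N1 h1] := itv_stable i1; have [N2 h2] := itv_stable i2.
exists (expR (- (maxn N1 N2).+2%:R)); split; first exact: expR_gt0.
move=> w /hdist_lt /close_sym hwz; apply: hVW.
  apply/s1/h1; first exact: hreal_hre.
  apply: close_le (leq_maxl N1 N2) _.
  exact: close_heq (heq_sym (heq_Re_hre w)) (heq_sym (heq_Re_hre z)) (close_Re hwz).
apply/s2/h2; first exact: hreal_him.
apply: close_le (leq_maxr N1 N2) _.
exact: close_heq (heq_sym (heq_Re_him w)) (heq_sym (heq_Re_him z)) (close_Im hwz).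
Qed.

End Asymptotics.

Theorem theorem7p4 (d : nat) (U : set (set (D0 Rdefinitions.R d)))
  (hd : (0 < d)%N)
  (hU : free_ultrafilter U)
  (hDn : forall n : nat, U (Dn n.+1))
  (hgood : cplus_good Rdefinitions.R U) :
  (* (i) *)
  (forall A : D0 Rdefinitions.R d -> Rdefinitions.R[i],
      moderate U A <-> Mrho (sC U A)) /\
  (* (ii) *)
  (exists Phi : hatC U -> rhoC U,
     [/\ (forall (A : D0 Rdefinitions.R d -> Rdefinitions.R[i])
                 (hA : moderate U A) (hM : Mrho (sC U A)),
            Phi (hcls hA) = rcls hM),
         bijective Phi,
         (forall x y, Phi (hadd x y) = radd (Phi x) (Phi y)),
         (forall x y, Phi (hmul x y) = rmul (Phi x) (Phi y)) &
         [/\ (forall x, hreal x <-> rreal (Phi x)),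
             (forall x, rval (Phi x) = hval x),
             (forall x, rnorm (Phi x) = hnorm x) &
             (forall x y, rdist (Phi x) (Phi y) = hdist x y)]]) /\
  (* (iii) *)
  (forall S : set (hatC U), order_open S <-> metric_open S).
Proof.
have hU1 := hU.1.
split; first by move=> A; exact: moderate_Mrho.
split; last by move=> S; split; [exact: order_open_metric_open | exact: metric_open_order_open].
have PhiV := Phi_val hU1 hDn hd.
exists (Phi hU1 hDn hd); split.
- exact: Phi_hcls.
- exact: Phi_bij.
- exact: Phi_add.
- exact: Phi_mul.
split.
- exact: Phi_real.
- exact: PhiV.
- by move=> x; rewrite /rnorm PhiV.
- by move=> x y; rewrite /rdist -Phi_sub /rnorm PhiV.
Qed.
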